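(* Let $f:[0,1]\to\mathbb{R}$ with $f(0),f(1)\in\mathbb{Z}$. (a) If $f(x)-x$ is monotone increasing on $[0,1]$, then $\widetilde{B}_n(f)$ and $\widehat{B}_n(f)$ are monotone increasing on $[0,1]$ for all $n\in\mathbb{N}_+$. (b) If $f(x)+x$ is monotone decreasing on $[0,1]$, then $\widetilde{B}_n(f)$ and $\widehat{B}_n(f)$ are monotone decreasing on $[0,1]$ for all $n\in\mathbb{N}_+$.
   Context: For $n\in\mathbb{N}_+$ and $f:[0,1]\to\mathbb{R}$, define $\widetilde{B}_n(f)(x):=\sum_{k=0}^n \left[f\left(\frac{k}{n}\right)\binom{n}{k}\right]x^k(1-x)^{n-k}$, where $[\alpha]$ is the largest integer $\le\alpha$, and $\widehat{B}_n(f)(x):=\sum_{k=0}^n \left\langle f\left(\frac{k}{n}\right)\binom{n}{k}\right\rangle x^k(1-x)^{n-k}$, where $\langle\alpha\rangle$ is the integer nearest to $\alpha$ (when $\alpha$ is a half-integer, $\langle\alpha\rangle$ may be either neighbouring integer, chosen arbitrarily; the result holds for any such choice). Monotone increasing/decreasing are meant in the non-strict sense. *)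

From mathcomp Require Import all_boot all_order all_algebra.
From mathcomp Require Import reals.
Set Implicit Arguments. Unset Strict Implicit. Unset Printing Implicit Defensive.
Import Order.TTheory GRing.Theory Num.Theory.
Local Open Scope ring_scope.

Definition mono_incr01 {R : realType} (g : R -> R) : Prop :=
  forall x y : R, 0 <= x -> x <= y -> y <= 1 -> g x <= g y.
Definition mono_decr01 {R : realType} (g : R -> R) : Prop :=
  forall x y : R, 0 <= x -> x <= y -> y <= 1 -> g y <= g x.

Definition bcoef {R : realType} (n : nat) (f : R -> R) (k : nat) : R :=
  f (k%:R / n%:R) * ('C(n, k))%:R.

Definition Bint {R : realType} (n : nat) (c : nat -> int) (x : R) : R :=
  \sum_(k < n.+1) (c k)%:~R * x ^+ k * (1 - x) ^+ (n - k).

Definition Btilde {R : realType} (n : nat) (f : R -> R) (x : R) : R :=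
  Bint n (fun k => Num.floor (bcoef n f k)) x.

(* c k is an integer nearest to f(k/n) binom(n,k), for every k <= n
   (at half-integers either neighbour may be chosen, independently for each k) *)
Definition nearest_coefs {R : realType} (n : nat) (f : R -> R) (c : nat -> int) : Prop :=
  forall k : nat, (k <= n)%N -> `|bcoef n f k - (c k)%:~R| <= 2^-1.

Definition Bhat {R : realType} (n : nat) (c : nat -> int) (x : R) : R := Bint n c x.

(** The coefficients of [Btilde n f] and [Bhat n f] in the Bernstein basis
    are [b_k = c_k / 'C(n, k)], where [c_k] is an integer approximation of
    [f(k/n) 'C(n, k)] within error less than one.  At [k = 0] and [k = n] the
    binomial coefficient is [1] and [f(k/n)] is an integer, so [b_k = f(k/n)]
    exactly; for [0 < k < n] we have ['C(n, k) >= n], so [b_k] lies within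
    [1/n] (floor) or [1/(2n)] (nearest integer) of [f(k/n)], on the correct
    side.  When [f x - x] increases, [f] grows by at least [1/n] between grid
    points, which absorbs this error and makes [b_k] nondecreasing; a
    Bernstein polynomial with nondecreasing coefficients is nondecreasing on
    [[0, 1]]. *)

From mathcomp Require Import all_boot all_order all_algebra.
From mathcomp Require Import reals.
From mathcomp Require Import ring lra zify.
Set Implicit Arguments. Unset Strict Implicit.
Import Order.TTheory GRing.Theory Num.Theory.
Local Open Scope ring_scope.

Section Bernstein.
Variable R : numDomainType.
Implicit Types (b : nat -> R) (x y : R).

Definition bernstein (n : nat) b x : R :=
  \sum_(k < n.+1) b k * 'C(n, k)%:R * x ^+ k * (1 - x) ^+ (n - k).

Lemma bernstein0 b x : bernstein 0 b x = b 0%N.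
Proof. by rewrite /bernstein big_ord1 /= bin0 !expr0 !mulr1. Qed.

Lemma bernsteinS n b x :
  bernstein n.+1 b x =
    (1 - x) * bernstein n b x + x * bernstein n (fun k => b k.+1) x.
Proof.
rewrite /bernstein big_ord_recl /= bin0 subn0.
under eq_bigr => i _ do rewrite /bump /= add1n binS natrD mulrDr !mulrDl subSS.
rewrite big_split /= addrA; congr (_ + _).
  rewrite [in RHS]big_ord_recl /= bin0 subn0 mulrDr.
  rewrite [in LHS]big_ord_recr /= bin_small // mulr0 !mul0r addr0.
  congr (_ + _); first by rewrite exprS; ring.
  rewrite mulr_sumr; apply: eq_bigr => i _; rewrite /bump /= add1n.
  by rewrite -(subnSK (ltn_ord i)) [(1 - x) ^+ (_.+1)]exprS; ring.
by rewrite mulr_sumr; apply: eq_bigr => i _; rewrite exprS; ring.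
Qed.

Lemma bernstein_ge0 n b x :
  (forall k, (k <= n)%N -> 0 <= b k) -> 0 <= x -> x <= 1 ->
  0 <= bernstein n b x.
Proof.
move=> b_ge0 x_ge0 x_le1; apply: sumr_ge0 => i _.
by rewrite !mulr_ge0 ?ler0n ?exprn_ge0 ?b_ge0 ?subr_ge0 // -ltnS.
Qed.

Lemma bernsteinB n b1 b2 x :
  bernstein n (fun k => b1 k - b2 k) x = bernstein n b1 x - bernstein n b2 x.
Proof. by rewrite /bernstein -sumrB; apply: eq_bigr => i _; ring. Qed.

Lemma bernsteinN n b x : bernstein n (fun k => - b k) x = - bernstein n b x.
Proof. by rewrite /bernstein -sumrN; apply: eq_bigr => i _; ring. Qed.

Lemma bernstein_nondecreasing n b :
  (forall k, (k < n)%N -> b k <= b k.+1) ->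
  forall x y, 0 <= x -> x <= y -> y <= 1 -> bernstein n b x <= bernstein n b y.
Proof.
elim: n b => [|n IHn] b b_incr x y x_ge0 le_xy y_le1.
  by rewrite !bernstein0.
have y_ge0 := le_trans x_ge0 le_xy.
rewrite !bernsteinS -subr_ge0.
set P := bernstein n b; set Q := bernstein n (fun k => b k.+1).
have dP : 0 <= P y - P x.
  by rewrite subr_ge0 IHn // => k k_lt; rewrite b_incr // ltnW.
have dQ : 0 <= Q y - Q x by rewrite subr_ge0 IHn // => k k_lt; rewrite b_incr.
have QP : 0 <= Q x - P x.
  rewrite /P /Q -bernsteinB bernstein_ge0 ?(le_trans le_xy) // => k k_le.
  by rewrite subr_ge0 b_incr.
have -> : (1 - y) * P y + y * Q y - ((1 - x) * P x + x * Q x) =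
  (1 - y) * (P y - P x) + y * (Q y - Q x) + (y - x) * (Q x - P x) by ring.
by rewrite !addr_ge0 // mulr_ge0 // subr_ge0.
Qed.

Lemma bernstein_nonincreasing n b :
  (forall k, (k < n)%N -> b k.+1 <= b k) ->
  forall x y, 0 <= x -> x <= y -> y <= 1 -> bernstein n b y <= bernstein n b x.
Proof.
move=> b_decr x y x_ge0 le_xy y_le1; rewrite -lerN2 -!bernsteinN.
by apply: bernstein_nondecreasing => // k k_lt; rewrite lerN2 b_decr.
Qed.

End Bernstein.

Lemma bin_interior_ge n k : (0 < k < n)%N -> (n <= 'C(n, k))%N.
Proof.
elim: n k => [|n IHn] [|[|k]] // /andP[_ k_lt]; first by rewrite bin1.
by rewrite binS -add1n leq_add ?IHn ?bin_gt0.
Qed.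

Section IntegerBernstein.
Variable R : realType.
Implicit Types (c : nat -> int) (d : nat -> R) (lo hi : R).

Lemma BintE n c (x : R) :
  Bint n c x = bernstein n (fun k => (c k)%:~R / 'C(n, k)%:R) x.
Proof.
apply: eq_bigr => i _.
by rewrite divfK // pnatr_eq0 -lt0n bin_gt0 -ltnS.
Qed.

Lemma Bint_incr01 n c d lo hi :
  (forall k, (k <= n)%N -> d k - lo <= (c k)%:~R / 'C(n, k)%:R <= d k + hi) ->
  (forall k, (k < n)%N -> d k + (lo + hi) <= d k.+1) ->
  mono_incr01 (Bint (R:=R) n c).
Proof.
move=> c_win d_step x y x_ge0 le_xy y_le1; rewrite !BintE.
apply: bernstein_nondecreasing => // k k_lt.
have /andP[_ ck_le] := c_win k (ltnW k_lt).
have /andP[ck1_ge _] := c_win k.+1 k_lt.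
have := d_step k k_lt; lra.
Qed.

Lemma Bint_decr01 n c d lo hi :
  (forall k, (k <= n)%N -> d k - lo <= (c k)%:~R / 'C(n, k)%:R <= d k + hi) ->
  (forall k, (k < n)%N -> d k.+1 + (lo + hi) <= d k) ->
  mono_decr01 (Bint (R:=R) n c).
Proof.
move=> c_win d_step x y x_ge0 le_xy y_le1; rewrite !BintE.
apply: bernstein_nonincreasing => // k k_lt.
have /andP[ck_ge _] := c_win k (ltnW k_lt).
have /andP[_ ck1_le] := c_win k.+1 k_lt.
have := d_step k k_lt; lra.
Qed.

End IntegerBernstein.

Section Coefficients.
Variables (R : realType) (f : R -> R) (n : nat).
Hypotheses (n_gt0 : (0 < n)%N)
  (f0_int : exists z : int, f 0 = z%:~R) (f1_int : exists z : int, f 1 = z%:~R).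

Lemma bcoef_endpoint k : (k <= n)%N -> ~~ (0 < k < n)%N ->
  'C(n, k) = 1%N /\ exists z : int, f (k%:R / n%:R) = z%:~R.
Proof.
move=> k_le; rewrite negb_and -leqNgt leqn0 => /orP[/eqP -> | n_le].
  by rewrite bin0 mul0r.
have -> : k = n by apply/eqP; rewrite eqn_leq k_le leqNgt.
by rewrite binn divff // pnatr_eq0 -lt0n.
Qed.

Lemma bcoef_div_window k (c : int) (lo hi : R) :
  (k <= n)%N -> 0 <= lo -> 0 <= hi ->
  `|bcoef n f k - c%:~R| < 1 ->
  bcoef n f k - lo <= c%:~R <= bcoef n f k + hi ->
  f (k%:R / n%:R) - lo / n%:R <= c%:~R / 'C(n, k)%:R
  <= f (k%:R / n%:R) + hi / n%:R.
Proof.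
rewrite /bcoef => k_le lo_ge0 hi_ge0 c_near /andP[c_ge c_le].
have n_pos : 0 < n%:R :> R by rewrite ltr0n.
have lon_ge0 : 0 <= lo / n%:R by rewrite divr_ge0 ?ler0n.
have hin_ge0 : 0 <= hi / n%:R by rewrite divr_ge0 ?ler0n.
have [/andP[k_gt0 k_lt] | k_end] := boolP (0 < k < n)%N; last first.
  have [C_end [z fz]] := bcoef_endpoint k_le k_end.
  move: c_near; rewrite C_end mulr1n fz mulr1 -intrB -intr_norm ltrz1.
  move=> zc_near.
  have -> : c = z by lia.
  by rewrite divr1 -fz; apply/andP; split; lra.
set C : R := 'C(n, k)%:R in c_ge c_le *; set d := f _ in c_ge c_le *.
have n_le_C : n%:R <= C by rewrite ler_nat bin_interior_ge ?k_gt0.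
have C_pos : 0 < C := lt_le_trans n_pos n_le_C.
have invC_ge0 : 0 <= C^-1 by rewrite invr_ge0 ltW.
have invC_le : C^-1 <= n%:R^-1 by rewrite lef_pV2.
set e := c%:~R - d * C.
have -> : c%:~R / C = d + e / C by rewrite /e; field; rewrite gt_eqF.
have eC_le : e / C <= hi / C by rewrite ler_wpM2r // /e; lra.
have eC_ge : - lo / C <= e / C by rewrite ler_wpM2r // /e; lra.
have hiC_le : hi / C <= hi / n%:R by rewrite ler_wpM2l.
have loC_le : lo / C <= lo / n%:R by rewrite ler_wpM2l.
by apply/andP; split; lra.
Qed.

Lemma floor_bcoef_window k : (k <= n)%N ->
  f (k%:R / n%:R) - 1 / n%:R <= (Num.floor (bcoef n f k))%:~R / 'C(n, k)%:R
  <= f (k%:R / n%:R) + 0 / n%:R.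
Proof.
move=> k_le; have fl_le := floor_le (bcoef n f k).
have fl_gt := floorD1_gt (bcoef n f k); rewrite intrD in fl_gt.
apply: bcoef_div_window => //; first by rewrite ger0_norm ?subr_ge0 //; lra.
by apply/andP; split; lra.
Qed.

Lemma nearest_bcoef_window (c : nat -> int) : nearest_coefs n f c ->
  forall k, (k <= n)%N ->
  f (k%:R / n%:R) - 2^-1 / n%:R <= (c k)%:~R / 'C(n, k)%:R
  <= f (k%:R / n%:R) + 2^-1 / n%:R.
Proof.
move=> c_near k k_le; apply: bcoef_div_window => //; try lra.
  by have := c_near k k_le; lra.
by move: (c_near k k_le); rewrite ler_distlC.
Qed.

End Coefficients.

Lemma grid_step_incr (R : realType) (g : R -> R) n :
  (0 < n)%N -> mono_incr01 (fun x => g x - x) ->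
  forall k, (k < n)%N -> g (k%:R / n%:R) + n%:R^-1 <= g (k.+1%:R / n%:R).
Proof.
move=> n_gt0 g_incr k k_lt.
have n_pos : 0 < n%:R :> R by rewrite ltr0n.
have kS : k.+1%:R / n%:R = k%:R / n%:R + n%:R^-1 :> R.
  by rewrite -natr1 mulrDl div1r.
have x_ge0 : 0 <= k%:R / n%:R :> R by rewrite divr_ge0 ?ler0n ?ltW.
have le_xy : k%:R / n%:R <= k.+1%:R / n%:R :> R.
  by rewrite kS lerDl invr_ge0 ltW.
have y_le1 : k.+1%:R / n%:R <= 1 :> R by rewrite ler_pdivrMr // mul1r ler_nat.
have := g_incr _ _ x_ge0 le_xy y_le1; lra.
Qed.

Lemma grid_step_decr (R : realType) (g : R -> R) n :
  (0 < n)%N -> mono_decr01 (fun x => g x + x) ->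
  forall k, (k < n)%N -> g (k.+1%:R / n%:R) + n%:R^-1 <= g (k%:R / n%:R).
Proof.
move=> n_gt0 g_decr k k_lt.
have opp_incr : mono_incr01 (fun x => - g x - x).
  by move=> x y x_ge0 le_xy y_le1; have := g_decr x y x_ge0 le_xy y_le1; lra.
have := grid_step_incr n_gt0 opp_incr k_lt; lra.
Qed.

Theorem theorem1p7 (R : realType) (f : R -> R)
  (hf0 : exists z : int, f 0 = z%:~R) (hf1 : exists z : int, f 1 = z%:~R) :
  (mono_incr01 (fun x => f x - x) ->
     forall n : nat, (0 < n)%N ->
       mono_incr01 (Btilde n f) /\
       (forall c : nat -> int, nearest_coefs n f c -> mono_incr01 (Bhat (R:=R) n c)))
  /\
  (mono_decr01 (fun x => f x + x) ->
     forall n : nat, (0 < n)%N ->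
       mono_decr01 (Btilde n f) /\
       (forall c : nat -> int, nearest_coefs n f c -> mono_decr01 (Bhat (R:=R) n c))).
Proof.
split=> f_mono n n_gt0.
- have f_step := grid_step_incr n_gt0 f_mono.
  split=> [|c c_near].
  + apply: (Bint_incr01 (floor_bcoef_window n_gt0 hf0 hf1)) => k k_lt /=.
    by have := f_step k k_lt; lra.
  + apply: (Bint_incr01 (nearest_bcoef_window n_gt0 hf0 hf1 c_near)).
    move=> k k_lt /=.
    by have := f_step k k_lt; lra.
- have f_step := grid_step_decr n_gt0 f_mono.
  split=> [|c c_near].
  + apply: (Bint_decr01 (floor_bcoef_window n_gt0 hf0 hf1)) => k k_lt /=.
    by have := f_step k k_lt; lra.
  + apply: (Bint_decr01 (nearest_bcoef_window n_gt0 hf0 hf1 c_near)).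
    move=> k k_lt /=.
    by have := f_step k k_lt; lra.
Qed.
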